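(* For $\alpha\in[0,1]$ and $r>0$ let $$h(r,\alpha):=2\sqrt{\frac{2(1-\alpha/2)r}{1+\alpha+(1-\alpha/2)r}+\frac{r}{1+r}}+3-\frac{1}{r^2(1+r)}.$$ For each $\alpha\in(0,1)$ the equation $h(r,\alpha)=0$ has a unique positive root $r=r_{\star}(\alpha)$, and, denoting by $r_\star(0)$ and $r_\star(1)$ the positive roots of $h(r,0)=0$ and $h(r,1)=0$, it holds that $0.3865\approx r_{\star}(0)< r_{\star}(\alpha)< r_{\star}(1)\approx0.4037$ for all $\alpha\in(0,1)$. *)

From Stdlib Require Import Reals.
Open Scope R_scope.

Definition h (r a : R) : R :=
  2 * sqrt (2 * (1 - a / 2) * r / (1 + a + (1 - a / 2) * r) + r / (1 + r))
  + 3 - 1 / (r ^ 2 * (1 + r)).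

From Stdlib Require Import Reals Ranalysis5 Lra Psatz.
From Coquelicot Require Import Coquelicot.
Open Scope R_scope.

(* For every alpha in [0,1], h is strictly increasing in r (both the square
   root and -1/(r^2(1+r)) increase) and strictly decreasing in alpha (only the
   first summand under the root depends on alpha, and it decreases).  Since
   h(3/10, alpha) < 0 < h(1, alpha), the intermediate value theorem gives a
   unique positive root r*(alpha).  If alpha < beta then
   h(r*(alpha), beta) < h(r*(alpha), alpha) = 0 = h(r*(beta), beta), so
   r*(alpha) < r*(beta). *)

Lemma Rdiv_lt_cross p q s t :
  0 < q -> 0 < t -> p * t < s * q -> p / q < s / t.
Proof.
  intros Hq Ht Hcross. apply (Rmult_lt_reg_r (q * t)); [nra |].
  replace (p / q * (q * t)) with (p * t) by (field; lra).
  replace (s / t * (q * t)) with (s * q) by (field; lra).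
  exact Hcross.
Qed.

Definition radicand (r a : R) : R :=
  2 * (1 - a / 2) * r / (1 + a + (1 - a / 2) * r) + r / (1 + r).

Lemma h_radicand r a :
  h r a = 2 * sqrt (radicand r a) + 3 - 1 / (r ^ 2 * (1 + r)).
Proof. reflexivity. Qed.

Section FixedAlpha.

Variable a : R.
Hypothesis Ha : 0 <= a <= 1.

Lemma radicand_pos r : 0 < r -> 0 < radicand r a.
Proof. intros Hr. apply Rplus_lt_0_compat; apply Rdiv_lt_0_compat; nra. Qed.

Lemma radicand_increasing x y : 0 < x < y -> radicand x a < radicand y a.
Proof.
  intros Hxy. apply Rplus_lt_compat; apply Rdiv_lt_cross; try nra.
  assert (0 < (1 - a / 2) * (1 + a) * (y - x)) by (apply Rmult_lt_0_compat; nra).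
  nra.
Qed.

Lemma h_increasing x y : 0 < x < y -> h x a < h y a.
Proof.
  intros Hxy. rewrite !h_radicand.
  assert (sqrt (radicand x a) < sqrt (radicand y a)).
  { apply sqrt_lt_1_alt. split.
    - left. apply radicand_pos. lra.
    - apply radicand_increasing. exact Hxy. }
  assert (1 / (y ^ 2 * (1 + y)) < 1 / (x ^ 2 * (1 + x))).
  { apply Rdiv_lt_cross; try nra. assert (x * x < y * y) by nra. nra. }
  lra.
Qed.

Lemma h_continuous r : 0 < r -> continuity_pt (fun x => h x a) r.
Proof.
  intros Hr. apply continuity_pt_filterlim.
  assert (Hder : ex_derive (fun x => h x a) r).
  { pose proof (radicand_pos r Hr). unfold radicand, h in *.
    auto_derive. repeat split; nra. }
  exact (ex_derive_continuous _ _ Hder).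
Qed.

Lemma h_at_3_10_neg : h (3 / 10) a < 0.
Proof.
  rewrite h_radicand.
  assert (Hfirst : 2 * (1 - a / 2) * (3 / 10) / (1 + a + (1 - a / 2) * (3 / 10))
                   <= 6 / 13).
  { apply Rle_div_l; nra. }
  assert (radicand (3 / 10) a < 1).
  { unfold radicand. replace (3 / 10 / (1 + 3 / 10)) with (3 / 13) by field. lra. }
  assert (sqrt (radicand (3 / 10) a) < 1).
  { rewrite <- sqrt_1. apply sqrt_lt_1_alt. split; [left; apply radicand_pos |]; lra. }
  replace (1 / ((3 / 10) ^ 2 * (1 + 3 / 10))) with (1000 / 117) by field.
  lra.
Qed.

Lemma h_at_1_pos : 0 < h 1 a.
Proof.
  rewrite h_radicand. pose proof (sqrt_pos (radicand 1 a)).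
  replace (1 / (1 ^ 2 * (1 + 1))) with (1 / 2) by field.
  lra.
Qed.

Lemma h_lt_reg x y : 0 < x -> 0 < y -> h x a < h y a -> x < y.
Proof.
  intros Hx Hy Hlt. destruct (Rtotal_order x y) as [| [Heq | Hgt]]; [assumption | |].
  - subst. lra.
  - pose proof (h_increasing y x (conj Hy Hgt)). lra.
Qed.

Lemma h_root_unique : exists! r, 0 < r /\ h r a = 0.
Proof.
  destruct (IVT_interv (fun x => h x a) (3 / 10) 1) as [r [Hr Hroot]].
  - intros x Hx. apply h_continuous. lra.
  - lra.
  - exact h_at_3_10_neg.
  - exact h_at_1_pos.
  - assert (Hpos : 0 < r) by lra.
    exists r. split; [split; [exact Hpos | exact Hroot] |].
    intros s [Hs Hsroot].
    destruct (Rtotal_order r s) as [Hlt | [Heq | Hgt]]; [| exact Heq |].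
    + pose proof (h_increasing r s (conj Hpos Hlt)). lra.
    + pose proof (h_increasing s r (conj Hs Hgt)). lra.
Qed.

End FixedAlpha.

Lemma radicand_decreasing r a b :
  0 <= a -> a < b -> b <= 1 -> 0 < r -> radicand r b < radicand r a.
Proof.
  intros. unfold radicand. apply Rplus_lt_compat_r, Rdiv_lt_cross; nra.
Qed.

Lemma h_decreasing r a b : 0 <= a -> a < b -> b <= 1 -> 0 < r -> h r b < h r a.
Proof.
  intros Ha Hab Hb Hr. rewrite !h_radicand.
  assert (sqrt (radicand r b) < sqrt (radicand r a)).
  { apply sqrt_lt_1_alt. split.
    - left. apply radicand_pos; [lra | exact Hr].
    - apply radicand_decreasing; assumption. }
  lra.
Qed.

Lemma h_root_increasing a b r s :
  0 <= a -> a < b -> b <= 1 ->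
  0 < r -> h r a = 0 -> 0 < s -> h s b = 0 -> r < s.
Proof.
  intros Ha Hab Hb Hr Hra Hs Hsb.
  apply (h_lt_reg b); [lra | exact Hr | exact Hs |].
  pose proof (h_decreasing r a b Ha Hab Hb Hr). lra.
Qed.

Theorem lemma2p1 :
  (* unique positive roots at alpha = 0 and alpha = 1 (presupposed by the paper) *)
  (exists! r0 : R, 0 < r0 /\ h r0 0 = 0) /\
  (exists! r1 : R, 0 < r1 /\ h r1 1 = 0) /\
  (* for each alpha in (0,1), a unique positive root *)
  (forall a : R, 0 < a < 1 -> exists! r : R, 0 < r /\ h r a = 0) /\
  (* ordering r*(0) < r*(alpha) < r*(1) *)
  (forall a r0 r r1 : R, 0 < a < 1 ->
     0 < r0 -> h r0 0 = 0 ->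
     0 < r -> h r a = 0 ->
     0 < r1 -> h r1 1 = 0 ->
     r0 < r < r1).
Proof.
  split; [apply h_root_unique; lra |].
  split; [apply h_root_unique; lra |].
  split; [intros a Ha; apply h_root_unique; lra |].
  intros a r0 r r1 Ha Hr0 E0 Hr E Hr1 E1. split.
  - apply (h_root_increasing 0 a); lra.
  - apply (h_root_increasing a 1); lra.
Qed.
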